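(* Let $P_0,P_1,Q_2\in\mathbb H$ be pairwise distinct with $\langle P_0,P_1\rangle=\langle P_0,Q_2\rangle=\langle P_1,Q_2\rangle$ (i.e. $P_0P_1Q_2$ is equilateral). Then there is $\varepsilon_2\in\{-1,1\}$ such that $$Q_2=\frac{-\langle P_0,P_1\rangle(P_0+P_1)+\varepsilon_2\sqrt{1-2\langle P_0,P_1\rangle}\,P_0\tilde\times P_1}{1-\langle P_0,P_1\rangle}.$$
   Context: $\langle v,w\rangle=-v_1w_1+v_2w_2+v_3w_3$ on $\mathbb R^3$; $\mathbb H=\{P\in\mathbb R^3:\langle P,P\rangle=-1,\ P_1\ge1\}$; $v\tilde\times w:=J(v\times w)$ with $J=\mathrm{diag}(-1,1,1)$ and $\times$ the Euclidean cross product. *)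

From Stdlib Require Import Reals.
Open Scope R_scope.

Definition vec3 : Type := (R * R * R)%type.

Definition v1 (v : vec3) : R := fst (fst v).
Definition v2 (v : vec3) : R := snd (fst v).
Definition v3 (v : vec3) : R := snd v.

Definition lor (v w : vec3) : R := - v1 v * v1 w + v2 v * v2 w + v3 v * v3 w.

Definition inH (P : vec3) : Prop := lor P P = -1 /\ 1 <= v1 P.

Definition cross (v w : vec3) : vec3 :=
  (v2 v * v3 w - v3 v * v2 w, v3 v * v1 w - v1 v * v3 w, v1 v * v2 w - v2 v * v1 w).

Definition Jmap (v : vec3) : vec3 := (- v1 v, v2 v, v3 v).

Definition lcross (v w : vec3) : vec3 := Jmap (cross v w).

Definition vadd (v w : vec3) : vec3 := (v1 v + v1 w, v2 v + v2 w, v3 v + v3 w).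
Definition vscale (a : R) (v : vec3) : vec3 := (a * v1 v, a * v2 v, a * v3 v).

(** Put [a = <P0,P1>] and [n = P0 ~x P1]; reverse Cauchy-Schwarz on the
    hyperboloid gives [a < -1], so [<n,n> = a^2 - 1 > 0].  The vector
    [r = Q2 - a/(a-1) (P0 + P1)] is Lorentz-orthogonal to [P0] and [P1],
    hence a multiple [t n] of [n] by the double cross product identity, and
    [<Q2,Q2> = -1] forces [(t (1-a))^2 = 1 - 2a]. *)

From Stdlib Require Import Reals Lra Psatz.
Open Scope R_scope.

Lemma vec3_ext (v w : vec3) : v1 v = v1 w -> v2 v = v2 w -> v3 v = v3 w -> v = w.
Proof.
  destruct v as [[x1 x2] x3], w as [[y1 y2] y3]; unfold v1, v2, v3; simpl.
  intros -> -> ->; reflexivity.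
Qed.

Ltac vec3_components :=
  apply vec3_ext; unfold lcross, Jmap, cross, vadd, vscale, v1, v2, v3; simpl.

Lemma lor_comm (v w : vec3) : lor v w = lor w v.
Proof. unfold lor; ring. Qed.

Lemma lor_addr (u v w : vec3) : lor u (vadd v w) = lor u v + lor u w.
Proof. unfold lor, vadd, v1, v2, v3; simpl; ring. Qed.

Lemma lor_scaler (k : R) (v w : vec3) : lor v (vscale k w) = k * lor v w.
Proof. unfold lor, vscale, v1, v2, v3; simpl; ring. Qed.

Lemma lcross_lcross (a b c : vec3) :
  lcross (lcross a b) c = vadd (vscale (lor b c) a) (vscale (- lor a c) b).
Proof. vec3_components; unfold lor, v1, v2, v3; ring. Qed.

Lemma lor_lcross_self (a b : vec3) :
  lor (lcross a b) (lcross a b) = lor a b * lor a b - lor a a * lor b b.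
Proof. unfold lor, lcross, Jmap, cross, v1, v2, v3; simpl; ring. Qed.

Lemma lor_inH_lt (P Q : vec3) : inH P -> inH Q -> P <> Q -> lor P Q < -1.
Proof.
  destruct P as [[p1 p2] p3], Q as [[q1 q2] q3].
  unfold inH, lor, v1, v2, v3; simpl.
  intros [HP HP1] [HQ HQ1] HPQ.
  set (d := p2 * q2 + p3 * q3).
  assert (Hgap : (p1 * q1) ^ 2 - (1 + d) ^ 2
                 = (p2 - q2) ^ 2 + (p3 - q3) ^ 2 + (p2 * q3 - p3 * q2) ^ 2).
  { replace ((p1 * q1) ^ 2) with ((p1 * p1) * (q1 * q1)) by ring.
    replace (p1 * p1) with (1 + p2 * p2 + p3 * p3) by lra.
    replace (q1 * q1) with (1 + q2 * q2 + q3 * q3) by lra.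
    unfold d; ring. }
  pose proof (pow2_ge_0 (p2 - q2)); pose proof (pow2_ge_0 (p3 - q3));
    pose proof (pow2_ge_0 (p2 * q3 - p3 * q2)).
  assert (Hge : 1 + d <= p1 * q1).
  { destruct (Rle_or_lt (1 + d) (p1 * q1)) as [Hle | Hlt]; [exact Hle | exfalso].
    assert (1 <= p1 * q1) by nra.
    assert (0 < (1 + d - p1 * q1) * (1 + d + p1 * q1)) by (apply Rmult_lt_0_compat; lra).
    nra. }
  destruct (Rle_lt_or_eq_dec _ _ Hge) as [Hlt | Heq]; [unfold d in Hlt; lra | exfalso].
  rewrite Heq in Hgap.
  assert (p2 = q2) as -> by (apply Rminus_diag_uniq, Rsqr_0_uniq; unfold Rsqr; nra).
  assert (p3 = q3) as -> by (apply Rminus_diag_uniq, Rsqr_0_uniq; unfold Rsqr; nra).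
  apply HPQ; replace p1 with q1 by nra; reflexivity.
Qed.

Lemma lor_orth_lcross_parallel (P Q r : vec3) :
  lor P r = 0 -> lor Q r = 0 -> lor (lcross P Q) (lcross P Q) <> 0 ->
  r = vscale (lor r (lcross P Q) / lor (lcross P Q) (lcross P Q)) (lcross P Q).
Proof.
  intros HP HQ Hn.
  set (n := lcross P Q) in *.
  assert (Hnr : lcross n r = vadd (vscale 0 P) (vscale (- 0) Q))
    by (unfold n; rewrite lcross_lcross, HP, HQ; reflexivity).
  pose proof (lcross_lcross n r n) as Hkey.
  rewrite Hnr in Hkey.
  set (s := lor r n) in *; set (m := lor n n) in *.
  apply vec3_ext;
    [apply (f_equal v1) in Hkey | apply (f_equal v2) in Hkey | apply (f_equal v3) in Hkey];
    revert Hkey; unfold lcross, Jmap, cross, vadd, vscale, v1, v2, v3; simpl; intro Hkey;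
    field_simplify_eq; auto; lra.
Qed.

Lemma equilateral_apex (P Q Z : vec3) :
  lor P P = -1 -> lor Q Q = -1 -> lor Z Z = -1 ->
  lor P Q <> 1 -> lor P Q <> -1 ->
  lor P Z = lor P Q -> lor Q Z = lor P Q ->
  exists u : R, u * u = 1 - 2 * lor P Q /\
    Z = vscale (/ (1 - lor P Q))
          (vadd (vscale (- lor P Q) (vadd P Q)) (vscale u (lcross P Q))).
Proof.
  intros HP HQ HZ Ha1 Ham1 HPZ HQZ.
  set (a := lor P Q) in *; set (n := lcross P Q).
  assert (Hden : a - 1 <> 0) by lra.
  assert (Hden' : 1 - a <> 0) by lra.
  set (c := a / (a - 1)).
  set (r := vadd Z (vscale (- c) (vadd P Q))).
  assert (HPr : lor P r = 0).
  { unfold r; rewrite lor_addr, lor_scaler, lor_addr, HPZ, HP; fold a; unfold c; field; auto. }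
  assert (HQr : lor Q r = 0).
  { unfold r; rewrite lor_addr, lor_scaler, lor_addr, HQZ, HQ, (lor_comm Q P); fold a.
    unfold c; field; auto. }
  assert (Hnn : lor n n = a * a - 1)
    by (unfold n; rewrite lor_lcross_self, HP, HQ; fold a; ring).
  assert (Hnn0 : lor n n <> 0) by (rewrite Hnn; intro E; nra).
  set (t := lor r n / lor n n).
  assert (Hr : r = vscale t n) by exact (lor_orth_lcross_parallel P Q r HPr HQr Hnn0).
  assert (Hrr : lor r r = -1 - 2 * c * a).
  (* [r] is orthogonal to [P] and [Q], so [<r,r> = <r,Z>]. *)
  { unfold r at 2; rewrite lor_addr, lor_scaler, lor_addr.
    rewrite (lor_comm r P), HPr, (lor_comm r Q), HQr.
    unfold r; rewrite lor_comm, lor_addr, lor_scaler, lor_addr.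
    rewrite HZ, (lor_comm Z P), HPZ, (lor_comm Z Q), HQZ; ring. }
  assert (Ht : t * t * (a * a - 1) = -1 - 2 * c * a).
  { rewrite <- Hnn, <- Hrr, Hr, lor_scaler, (lor_comm (vscale t n) n), lor_scaler; ring. }
  exists (t * (1 - a)); split.
  - apply (Rmult_eq_reg_r (a + 1)); [| lra].
    replace (t * (1 - a) * (t * (1 - a)) * (a + 1)) with (t * t * (a * a - 1) * (a - 1))
      by ring.
    rewrite Ht; unfold c; field; auto.
  - assert (HZr : Z = vadd r (vscale c (vadd P Q))) by (unfold r; vec3_components; ring).
    rewrite HZr, Hr; vec3_components; unfold c; field; auto.
Qed.

Lemma signed_sqrt_sqr (u : R) :
  exists eps : R, (eps = 1 \/ eps = -1) /\ u = eps * sqrt (u * u).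
Proof.
  change (u * u) with (Rsqr u); rewrite sqrt_Rsqr_abs.
  destruct (Rle_or_lt 0 u) as [Hu | Hu].
  - exists 1; split; [left; reflexivity | rewrite Rabs_pos_eq; lra].
  - exists (-1); split; [right; reflexivity | rewrite Rabs_left; lra].
Qed.

Theorem corollary2p3 (P0 P1 Q2 : vec3) :
  inH P0 -> inH P1 -> inH Q2 ->
  P0 <> P1 -> P0 <> Q2 -> P1 <> Q2 ->
  lor P0 P1 = lor P0 Q2 -> lor P0 P1 = lor P1 Q2 ->
  exists eps2 : R, (eps2 = 1 \/ eps2 = -1) /\
    Q2 = vscale (/ (1 - lor P0 P1))
           (vadd (vscale (- lor P0 P1) (vadd P0 P1))
                 (vscale (eps2 * sqrt (1 - 2 * lor P0 P1)) (lcross P0 P1))).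
Proof.
  intros HP0 HP1 HQ2 H01 _ _ H0Q H1Q.
  pose proof (lor_inH_lt P0 P1 HP0 HP1 H01) as Ha.
  destruct (equilateral_apex P0 P1 Q2) as [u [Hu HQ]];
    [apply HP0 | apply HP1 | apply HQ2 | lra | lra | auto | auto |].
  destruct (signed_sqrt_sqr u) as [eps [Heps Hsign]].
  exists eps; split; [exact Heps |].
  rewrite <- Hu, <- Hsign; exact HQ.
Qed.
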